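(* Let $G=(g_1,\dots,g_k)\in\mathbb{N}_0^k$ with $g_1>0$, $\gcd(G)=1$ and $c(G)=(c_2,\dots,c_k)$, and let $z_1=1$. Then $G$ is telescopic if and only if for each $i=2,\dots,k$ there exists $z_i\in\mathbb{N}_0$ such that $g_i=z_iC_{i,k}$, $\gcd(z_i,c_i)=1$, and $z_i\in\langle z_jC_{j,i-1} : 1\le j<i\rangle$.
   Context: $\langle A\rangle$ is the set of $\mathbb{N}_0$-linear combinations of the elements of $A$. $G_i=(g_1,\dots,g_i)$, $d_i=\gcd(G_i)$, $c_j=d_{j-1}/d_j$ for $2\le j\le k$; $G$ is telescopic if $c_jg_j\in\langle G_{j-1}\rangle$ for all $2\le j\le k$. $C_{m,n}=\prod_{j=m+1}^n c_j$, with the empty product (when $n\le m$) equal to $1$. *)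

(* G = (g_1,...,g_k) is encoded as g : nat -> nat, using only
   the values g 1, ..., g k (g 0 and g i for i > k are irrelevant). *)
From mathcomp Require Import all_boot.
Set Implicit Arguments. Unset Strict Implicit. Unset Printing Implicit Defensive.

(* d_i = gcd(g_1, ..., g_i)  (d_0 = gcd of empty family = 0) *)
Definition dgcd (g : nat -> nat) (i : nat) : nat :=
  \big[gcdn/0]_(1 <= j < i.+1) g j.

Definition cc (g : nat -> nat) (j : nat) : nat := dgcd g j.-1 %/ dgcd g j.

Definition CC (g : nat -> nat) (m n : nat) : nat :=
  \prod_(m.+1 <= j < n.+1) cc g j.

Definition in_semigroup (h : nat -> nat) (i : nat) (x : nat) : Prop :=
  exists a : nat -> nat, x = \sum_(1 <= j < i) a j * h j.

Definition telescopic (k : nat) (g : nat -> nat) : Prop :=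
  forall j, 2 <= j <= k -> in_semigroup g j (cc g j * g j).

From mathcomp Require Import all_boot.

(* Since d_k = 1, the product C_{i,k} telescopes to d_i, so the z_i are forced
   to be g_i / d_i, and then gcd(z_i, c_i) = gcd(g_i, d_{i-1}) / d_i = 1.
   Moreover c_i g_i = z_i d_{i-1} and g_j = z_j C_{j,i-1} d_{i-1} for j < i,
   so dividing the telescopic relation for c_i g_i by d_{i-1} gives exactly
   the membership of z_i, and conversely. *)

Lemma dgcdS g i : dgcd g i.+1 = gcdn (dgcd g i) (g i.+1).
Proof. by rewrite /dgcd big_nat_recr. Qed.

Lemma dgcd1 g : dgcd g 1 = g 1.
Proof. by rewrite dgcdS /dgcd big_geq // gcd0n. Qed.

Lemma dgcd_gt0 g i : 0 < g 1 -> 0 < i -> 0 < dgcd g i.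
Proof.
move=> g1_gt0; elim: i => // [[|i]] IHi _; first by rewrite dgcd1.
by rewrite dgcdS gcdn_gt0 IHi.
Qed.

Lemma dgcd_dvdn g i : 0 < i -> dgcd g i %| g i.
Proof. by case: i => // i _; rewrite dgcdS dvdn_gcdr. Qed.

Lemma dgcd_dvd_pred g i : 0 < i -> dgcd g i %| dgcd g i.-1.
Proof. by case: i => // i _; rewrite dgcdS dvdn_gcdl. Qed.

Lemma mul_cc_dgcd g i : 0 < i -> cc g i * dgcd g i = dgcd g i.-1.
Proof. by move=> i_gt0; rewrite /cc divnK // dgcd_dvd_pred. Qed.

Lemma mul_CC_dgcd g m n : 0 < m -> m <= n -> CC g m n * dgcd g n = dgcd g m.
Proof.
move=> m_gt0; elim: n => [|n IHn]; first by rewrite leqn0 => /eqP m0; rewrite m0 in m_gt0.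
rewrite leq_eqVlt => /orP[/eqP <-|]; first by rewrite /CC big_geq // mul1n.
rewrite ltnS => le_mn; rewrite /CC big_nat_recr //= -mulnA.
by rewrite (@mul_cc_dgcd g n.+1 (ltn0Sn n)) -IHn.
Qed.

Lemma CC_dgcd_eq1 g j k : 0 < j <= k -> dgcd g k = 1 -> CC g j k = dgcd g j.
Proof.
by case/andP=> j_gt0 le_jk dk1; rewrite -(@mul_CC_dgcd g j k j_gt0 le_jk) dk1 muln1.
Qed.

Lemma coprime_div_dgcd_cc g i : 0 < g 1 -> 1 < i ->
  coprime (g i %/ dgcd g i) (cc g i).
Proof.
move=> g1_gt0 i_gt1; have i_gt0 : 0 < i := ltnW i_gt1.
have di_gt0 := @dgcd_gt0 g i g1_gt0 i_gt0.
rewrite /coprime /cc -(eqn_pmul2r di_gt0) mul1n muln_gcdl.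
rewrite !divnK ?dgcd_dvdn ?dgcd_dvd_pred //.
by case: i i_gt0 {i_gt1 di_gt0} => // i _; rewrite dgcdS gcdnC.
Qed.

Lemma eq_in_semigroup h h' i x :
  (forall j, 1 <= j < i -> h j = h' j) ->
  in_semigroup h i x <-> in_semigroup h' i x.
Proof.
move=> eq_hh'.
have eq_sum a : \sum_(1 <= j < i) a j * h j = \sum_(1 <= j < i) a j * h' j.
  by apply: eq_big_nat => j /eq_hh' ->.
by split=> -[a xE]; exists a; rewrite xE eq_sum.
Qed.

Lemma in_semigroup_scale h i x d : 0 < d ->
  in_semigroup (fun j => h j * d) i (x * d) <-> in_semigroup h i x.
Proof.
move=> d_gt0; rewrite /in_semigroup.
suff eq_scale a : (x * d = \sum_(1 <= j < i) a j * (h j * d)) <->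
                  (x = \sum_(1 <= j < i) a j * h j).
  by split=> -[a /eq_scale]; exists a.
rewrite (eq_bigr (fun j => a j * h j * d)) => [|j _]; last by rewrite mulnA.
rewrite -big_distrl /=; split=> [/eqP|->] //.
by rewrite eqn_pmul2r // => /eqP.
Qed.

Lemma telescopic_stepE g z i : 0 < g 1 -> 1 < i ->
  (forall j, 0 < j <= i -> z j * dgcd g j = g j) ->
  in_semigroup g i (cc g i * g i) <->
  in_semigroup (fun j => z j * CC g j i.-1) i (z i).
Proof.
move=> g1_gt0 i_gt1 zE; have i_gt0 : 0 < i := ltnW i_gt1.
have ip_gt0 : 0 < i.-1 by rewrite -ltnS prednK.
have dp_gt0 := @dgcd_gt0 g i.-1 g1_gt0 ip_gt0.
have scaled := in_semigroup_scale (fun j => z j * CC g j i.-1) i (z i) _ dp_gt0.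
have -> : cc g i * g i = z i * dgcd g i.-1.
  by rewrite -(@mul_cc_dgcd g i i_gt0) mulnCA zE // i_gt0 leqnn.
have gE : in_semigroup g i (z i * dgcd g i.-1) <->
          in_semigroup (fun j => z j * CC g j i.-1 * dgcd g i.-1) i (z i * dgcd g i.-1).
  apply: eq_in_semigroup => j /andP[j_gt0 lt_ji].
  have le_jip : j <= i.-1 by rewrite -ltnS prednK.
  by rewrite -mulnA mul_CC_dgcd // zE // j_gt0 ltnW.
by split=> [/gE/scaled | /scaled/gE].
Qed.

Theorem mainTheorem8 (k : nat) (g : nat -> nat) :
  1 <= k -> 0 < g 1 -> dgcd g k = 1 ->
  telescopic k g <->
  exists z : nat -> nat,
    z 1 = 1 /\
    forall i, 2 <= i <= k ->
      [/\ g i = z i * CC g i k,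
          coprime (z i) (cc g i)
        & in_semigroup (fun j => z j * CC g j i.-1) i (z i)].
Proof.
move=> k_gt0 g1_gt0 dk1; split.
  move=> tele; exists (fun j => g j %/ dgcd g j); split=> [|i /andP[i_gt1 le_ik]].
    by rewrite dgcd1 divnn g1_gt0.
  have i_gt0 : 0 < i := ltnW i_gt1.
  split; first by rewrite CC_dgcd_eq1 ?i_gt0 // divnK // dgcd_dvdn.
    exact: coprime_div_dgcd_cc.
  apply/(@telescopic_stepE g _ i g1_gt0 i_gt1); last by apply: tele; rewrite i_gt1.
  by move=> j /andP[j_gt0 _]; rewrite divnK // dgcd_dvdn.
move=> [z [z1 zP]] i /andP[i_gt1 le_ik].
have zE j : 0 < j <= k -> z j * dgcd g j = g j.
  case/andP=> j_gt0 le_jk; case: (ltngtP j 1) => [|j_gt1|->].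
  - by rewrite ltnNge j_gt0.
  - by case: (zP j); rewrite ?j_gt1 // => -> _ _; rewrite CC_dgcd_eq1 ?j_gt0.
  - by rewrite z1 dgcd1 mul1n.
have [_ _ zi_in] := zP i (introT andP (conj i_gt1 le_ik)).
apply/(@telescopic_stepE g z i g1_gt0 i_gt1) => // j /andP[j_gt0 le_ji].
by rewrite zE // j_gt0 (leq_trans le_ji).
Qed.
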